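(* Consider $n=\sum_{i=1}^L n_i$ component lifetimes $T_j^{(i)}$, $j=1,\dots,n_i$, $i=1,\dots,L$ ($L\ge1$), where components of type $i$ have common reliability function $\bar F_i$, the lifetimes within each type are exchangeable, and the joint reliability function is given by a survival copula $\hat C$: $$P(T_j^{(i)}>t_j^{(i)},\ j=1,\dots,n_i,\ i=1,\dots,L)=\hat C\big(\bar F_1(t_1^{(1)}),\dots,\bar F_1(t_{n_1}^{(1)}),\dots,\bar F_L(t_1^{(L)}),\dots,\bar F_L(t_{n_L}^{(L)})\big).$$ Fix $i\in\{1,\dots,L\}$, integers $0\le m_k\le n_k$ for $k\ne i$ and $0\le m_i\le n_i-1$, $t\ge 0$ and $\delta>0$, and define $$A_{\mathbf{m}}^{(i)}(t,\delta)=P\Big(T_1^{(k)}>t,\dots,T_{m_k}^{(k)}>t,\ T_{m_k+1}^{(k)}\le t,\dots,T_{n_k}^{(k)}\le t \text{ for all } k\neq i;\ t<T_1^{(i)}\le t+\delta,\ T_2^{(i)}>t,\dots,T_{m_i+1}^{(i)}>t,\ T_{m_i+2}^{(i)}\le t,\dots,T_{n_i}^{(i)}\le t\Big).$$ Then $$A_{\mathbf{m}}^{(i)}(t, \delta)=\sum_{j_1=0}^{n_1-m_1}\cdots\sum_{j_i=0}^{n_i-m_i-1}\cdots\sum_{j_L=0}^{n_L-m_L}(-1)^{j_1+\cdots + j_L}\binom{n_1-m_1}{j_1}\cdots \binom{n_i-m_i-1}{j_i}\cdots\binom{n_L-m_L}{j_L}\Big[\hat{C}(\underbrace{\bar{F}_1(t)}_{m_1+j_1},\underbrace{1}_{n_1-(m_1+j_1)},\dots,\underbrace{\bar{F}_i(t)}_{m_i+j_i+1},\underbrace{1}_{n_i-(m_i+j_i+1)},\dots,\underbrace{\bar{F}_L(t)}_{m_L+j_L},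 \underbrace{1}_{n_L-(m_L+j_L)})-\hat{C}(\underbrace{\bar{F}_1(t)}_{m_1+j_1},\underbrace{1}_{n_1-(m_1+j_1)},\dots,\underbrace{\bar{F}_i(t)}_{m_i+j_i},\bar{F}_i(t+\delta),\underbrace{1}_{n_i-(m_i+j_i+1)}, \dots,\underbrace{\bar{F}_L(t)}_{m_L+j_L},\underbrace{1}_{n_L-(m_L+j_L)})\Big].$$
   Context: In the arguments of $\hat C$, the notation $\underbrace{u}_{m}$ denotes $m$ consecutive repetitions of the value $u$; the arguments are listed block by block, the $k$th block consisting of the $n_k$ arguments associated with the components of type $k$ (by within-type exchangeability, the order of arguments inside a block is immaterial). *)

From HB Require Import structures.
From mathcomp Require Import all_boot all_order all_algebra.
From mathcomp Require Import all_classical all_reals all_analysis.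
Set Implicit Arguments. Unset Strict Implicit. Unset Printing Implicit Defensive.
Import Order.TTheory GRing.Theory Num.Theory.
Local Open Scope ring_scope.

Definition copula (R : realType) (I : finType) (C : (I -> R) -> R) : Prop :=
  [/\ (forall u : I -> R, (forall x, 0 <= u x <= 1) ->
          (exists x, u x = 0) -> C u = 0),
      (forall (u : I -> R) (x : I), (forall y, 0 <= u y <= 1) ->
          (forall y, y != x -> u y = 1) -> C u = u x) &
      (forall a b : I -> R, (forall x, 0 <= a x /\ a x <= b x /\ b x <= 1) ->
          0 <= \sum_(S : {set I}) (-1) ^+ #|~: S| *
                 C (fun x => if x \in S then b x else a x))].

From HB Require Import structures.
From mathcomp Require Import all_boot all_order all_algebra.
From mathcomp Require Import all_classical all_reals all_analysis.
From mathcomp Require Import perm zify.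
Import Order.TTheory GRing.Theory Num.Theory.
Local Open Scope ring_scope.

(* The event is W(t) minus W(t + delta), where W(a) requires the special
   component (type i, index 0) to outlive a, the other designated survivors to
   outlive t, and all remaining components to have failed by t.
   Inclusion-exclusion over the failed components expands P(W(a)) into an
   alternating sum of joint survival probabilities. By exchangeability within
   each type, such a probability depends only on how many failed components of
   each type are required to survive t, so it is Chat at a canonically ordered
   threshold vector; grouping the subsets by these counts yields the binomial
   coefficients. *)

Lemma perm_eq_map_if {T U : eqType} (a : pred T) (x y : U) (s : seq T) :
  perm_eq [seq if a z then x else y | z <- s]
          (nseq (count a s) x ++ nseq (size s - count a s) y).
Proof.
elim: s => //= z s IH; case: (a z) => /=; first by rewrite add1n subSS perm_cons.
by rewrite add0n subSn ?count_size //= perm_sym -cat1s perm_catCA perm_cons perm_sym.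
Qed.

Lemma perm_eq_nth_perm (T : eqType) (x0 : T) (N : nat) (s1 s2 : seq T) :
  size s1 = N -> perm_eq s1 s2 ->
  exists sg : 'S_N, forall p : 'I_N, nth x0 s1 p = nth x0 s2 (sg p).
Proof.
move=> size1 s12; have size2 : size s2 == N by rewrite -(perm_size s12) size1.
move: s12 => /(@tuple_permP _ _ _ (Tuple size2)) [sg s1E]; exists sg => p.
by rewrite s1E -(tnth_nth x0) tnth_mktuple (tnth_nth x0).
Qed.

Lemma big_subsetU1 (R : nmodType) (Y : finType) (y : Y) (A : {set Y})
    (F : {set Y} -> R) : y \notin A ->
  \sum_(S : {set Y} | S \subset y |: A) F S =
  \sum_(S : {set Y} | S \subset A) F S + \sum_(S : {set Y} | S \subset A) F (y |: S).
Proof.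
move=> yA; rewrite (bigID (fun S : {set Y} => y \in S)) /= addrC; congr (_ + _).
  by apply: eq_bigl => S; rewrite -[in RHS](setU1K yA) subsetD1 andbC.
rewrite (reindex_onto (fun S : {set Y} => y |: S) (fun S => S :\ y)) /=; last first.
  by move=> S /andP[_ yS]; rewrite finset.setD1K.
apply: eq_bigl => S; apply/idP/idP => [/andP[/andP[sub _] /eqP <-]|SA].
  by rewrite -(setU1K yA) finset.setSD.
have yS : y \notin S by apply: contra yA => /(fintype.subsetP SA).
by rewrite finset.setUS // setU11 setU1K /=.
Qed.

Section FibreCards.
Context {I : finType} {b : I -> nat}.

Definition fibre (S : {set {k : I & 'I_(b k)}}) (k : I) : {set 'I_(b k)} :=
  [set j | Tagged (fun k => 'I_(b k)) j \in S].

Definition fibres S : {dffun forall k : I, {set 'I_(b k)}} := finfun (fibre S).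

Definition fibre_cards S : {dffun forall k : I, 'I_(b k).+1} :=
  finfun (fun k => inord #|fibre S k|).

Lemma fibre_cardsE S k : fibre_cards S k = #|fibre S k| :> nat.
Proof.
by rewrite ffunE inordK // ltnS; have := max_card (fibre S k); rewrite card_ord.
Qed.

Lemma card_fibres (S : {set {k : I & 'I_(b k)}}) : #|S| = (\sum_k #|fibre S k|)%N.
Proof.
rewrite -sum1_card (eq_bigl (fun x => true && (tagged x \in fibre S (tag x)))).
  rewrite -(sig_big_dep (fun k => true) (fun k j => j \in fibre S k) (fun _ _ => 1%N)).
  by apply: eq_bigr => k _; rewrite sum1_card.
by case=> k j; rewrite inE.
Qed.

Lemma fibres_bij : bijective fibres.
Proof.
exists (fun F : {dffun forall k : I, {set 'I_(b k)}} =>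
  [set x : {k : I & 'I_(b k)} | tagged x \in F (tag x)]).
  by move=> S; apply/setP => -[k j]; rewrite !inE ffunE inE.
by move=> F; apply/ffunP => k; apply/setP => j; rewrite ffunE !inE.
Qed.

Lemma card_fibre_cards (J : {dffun forall k : I, 'I_(b k).+1}) :
  #|[pred S | fibre_cards S == J]| = (\prod_k 'C(b k, J k))%N.
Proof.
pose A : simpl_pred {dffun forall k : I, {set 'I_(b k)}} :=
  family (fun k => [pred F : {set 'I_(b k)} | #|F| == J k]).
have -> : #|[pred S | fibre_cards S == J]| = #|fibres @^-1: A|.
  apply: eq_card => S; rewrite !inE; apply/eqP/familyP => [<- k|cardS].
    by rewrite inE ffunE -fibre_cardsE.
  apply/ffunP => k; apply/val_inj; rewrite /= fibre_cardsE.
  by have := cardS k; rewrite inE ffunE => /eqP.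
rewrite on_card_preimset; last exact: onW_bij fibres_bij.
rewrite card_family foldrE big_map big_enum /=; apply: eq_bigr => k _.
by have := card_draws 'I_(b k) (J k); rewrite cardsE card_ord.
Qed.

Lemma sum_by_fibre_cards (R : comNzRingType)
    (Phi : {dffun forall k : I, 'I_(b k).+1} -> R) :
  \sum_(S : {set {k : I & 'I_(b k)}}) (-1) ^+ #|S| * Phi (fibre_cards S) =
  \sum_(J : {dffun forall k : I, 'I_(b k).+1})
     (-1) ^+ (\sum_k J k)%N * (\prod_k ('C(b k, J k))%:R) * Phi J.
Proof.
rewrite (partition_big fibre_cards predT) //=; apply: eq_bigr => J _.
rewrite (eq_bigr (fun=> (-1) ^+ (\sum_k J k)%N * Phi J)); last first.
  move=> S /eqP <-; rewrite card_fibres; congr (_ ^+ _ * _).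
  by apply: eq_bigr => k _; rewrite fibre_cardsE.
by rewrite sumr_const card_fibre_cards -natr_prod mulr_natr mulrnAl.
Qed.

End FibreCards.

Local Open Scope classical_set_scope.

Lemma forall_in_setU1 (T : Type) (Y : finType) (y : Y) (S : {set Y})
    (C : Y -> set T) :
  [set w | forall z, z \in y |: S -> C z w] =
  C y `&` [set w | forall z, z \in S -> C z w].
Proof.
apply/seteqP; split => w /=.
  by move=> H; split => [|z zS]; apply: H; rewrite !inE ?eqxx ?zS ?orbT.
by move=> [Cy H] z; rewrite !inE => /predU1P[->|/H].
Qed.

Section InclusionExclusion.
Context (R : realType) (d : measure_display) (Omega : measurableType d).
Variable P : probability Omega R.

Lemma measurable_fin_forall (Y : finType) (C : Y -> set Omega) :
  (forall y, measurable (C y)) -> measurable [set w | forall y, C y w].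
Proof.
move=> mC; rewrite (_ : [set w | _] = \bigcap_(y in [set: Y]) C y).
  by apply: fin_bigcap_measurable => //; exact: finite_finset.
by apply/seteqP; split => w /= H y //; apply: H.
Qed.

Lemma measurable_forall_in (Y : finType) (A : {set Y}) (C : Y -> set Omega) :
  (forall y, measurable (C y)) -> measurable [set w | forall y, y \in A -> C y w].
Proof.
move=> mC; rewrite (_ : [set w | _] = \bigcap_(y in [set y | y \in A]) C y).
  by apply: fin_bigcap_measurable => //; exact: finite_finset.
by apply/seteqP; split => w /= H y; apply: H.
Qed.

Lemma fine_measureD (X Z : set Omega) : measurable X -> measurable Z ->
  fine (P (X `\` Z)) = fine (P X) - fine (P (X `&` Z)).
Proof.
move=> mX mZ; have finX : P X \is a fin_num by exact: fin_num_measure.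
rewrite measureD ?ltey_eq ?finX // fineB //.
exact/fin_num_measure/measurableI.
Qed.

Lemma inclusion_exclusion (Y : finType) (B : Y -> set Omega) :
  (forall y, measurable (B y)) ->
  forall (A : {set Y}) (E : set Omega), measurable E ->
  fine (P (E `&` [set w | forall y, y \in A -> ~ B y w])) =
  \sum_(S : {set Y} | S \subset A)
     (-1) ^+ #|S| * fine (P (E `&` [set w | forall y, y \in S -> B y w])).
Proof.
move=> mB A; move: {2}#|A| (erefl #|A|) => N.
elim: N A => [|N IH] A cardA E mE.
  move/eqP: cardA; rewrite cards_eq0 => /eqP ->.
  rewrite (big_pred1 finset.set0) => [|S]; last by rewrite finset.subset0.
  rewrite cards0 expr0 mul1r; congr (fine (P _)).
  by apply/seteqP; split => w [Ew _]; split => // y; rewrite inE.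
have [y yA] : exists y, y \in A by apply/card_gt0P; rewrite cardA.
have cardA' : #|A :\ y| = N by move: cardA; rewrite (cardsD1 y A) yA => -[].
have mAvoid (Z : {set Y}) : measurable [set w | forall z, z \in Z -> ~ B z w].
  by apply: measurable_forall_in => z; exact: measurableC.
rewrite -(finset.setD1K yA) big_subsetU1 ?setD11 // forall_in_setU1.
rewrite (_ : E `&` _ =
    (E `&` [set w | forall z, z \in A :\ y -> ~ B z w]) `\` B y); last first.
  by rewrite setDE setIA setIAC.
have mEA : measurable (E `&` [set w | forall z, z \in A :\ y -> ~ B z w]).
  exact: measurableI.
rewrite fine_measureD // setIAC !IH //; last exact: measurableI.
congr (_ + _); rewrite -sumrN; apply: eq_bigr => S SA.
have yS : y \notin S by apply/negP => /(fintype.subsetP SA); rewrite setD11.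
by rewrite cardsU1 yS exprS mulN1r mulNr forall_in_setU1 setIA.
Qed.

End InclusionExclusion.

Section Lifetimes.
Context {R : realType} {d : measure_display} {Omega : measurableType d}.
Context {P : probability Omega R} {L : nat} {n : 'I_L -> nat}.
Variable T : {k : 'I_L & 'I_(n k)} -> {RV P >-> R}.
Hypothesis T_ge0 : forall x w, 0 <= T x w.

(* A threshold of -1 constrains nothing, lifetimes being nonnegative. *)
Definition survival (s : 'I_L -> seq R) : set Omega :=
  [set w | forall x, nth (-1) (s (tag x)) (nat_of_ord (tagged x)) < T x w].

Lemma lt_lifetime_neg1 x w : -1 < T x w.
Proof. exact: lt_le_trans (ltrN10 R) (T_ge0 x w). Qed.

Lemma measurable_lt_lifetime x (a : R) : measurable [set w | a < T x w].
Proof.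
rewrite (_ : [set w | _] = T x @^-1` `]a, +oo[); first exact: measurable_funPTI.
by apply/seteqP; split => w /=; rewrite in_itv /= andbT.
Qed.

Lemma measurable_survival s : measurable (survival s).
Proof. by apply: measurable_fin_forall => x; exact: measurable_lt_lifetime. Qed.

Lemma reliability_neg1 (Fbar : 'I_L -> R -> R) :
  (forall x s, P [set w | s < T x w] = (Fbar (tag x) s)%:E) ->
  forall x : {k : 'I_L & 'I_(n k)}, Fbar (tag x) (-1) = 1.
Proof.
move=> hF x; have := hF x (-1); rewrite (_ : [set w | _] = setT).
  by rewrite probability_setT => -[].
by apply/seteqP; split => w //= _; exact: lt_lifetime_neg1.
Qed.

Hypothesis exchangeable : forall (sg : forall k : 'I_L, {perm 'I_(n k)})
    (s : {k : 'I_L & 'I_(n k)} -> R),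
  P [set w | forall x, s x < T (Tagged (fun k => 'I_(n k)) (sg (tag x) (tagged x))) w]
  = P [set w | forall x, s x < T x w].

Lemma survival_perm {s1 s2 : 'I_L -> seq R} :
  (forall k, size (s1 k) = n k) -> (forall k, perm_eq (s1 k) (s2 k)) ->
  P (survival s1) = P (survival s2).
Proof.
move=> size1 s12.
have /all_sig[sg sgE] : forall k, {sg : 'S_(n k) |
    forall p : 'I_(n k), nth (-1) (s1 k) p = nth (-1) (s2 k) (sg p)}.
  by move=> k; apply: cid; exact: perm_eq_nth_perm.
rewrite /survival -(exchangeable sg); congr (P _).
apply/seteqP; split => w /= Hw [k p] /=.
  by have := Hw (Tagged (fun k => 'I_(n k)) ((sg k)^-1%g p)); rewrite /= sgE permKV.
by rewrite sgE; exact: (Hw (Tagged (fun k => 'I_(n k)) (sg k p))).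
Qed.

Section Configuration.
Variables (i : 'I_L) (m : 'I_L -> nat) (t : R).
Hypotheses (hm : forall k, k != i -> (m k <= n k)%N) (hmi : (m i < n i)%N).

(* In type k, the indices below [nalive k] are the special component (when
   k = i) followed by the designated survivors; failed slot j is index
   [nalive k + j]. *)
Local Notation nalive k := (m k + (k == i))%N.
Local Notation nfailed k := (n k - m k - (k == i))%N.
Local Notation failed_type := {k : 'I_L & 'I_(nfailed k)}.

Lemma nalive_failed k : (nalive k + nfailed k)%N = n k.
Proof.
case: (eqVneq k i) => [->|ki] /=; first lia.
by have := hm _ ki; lia.
Qed.

Definition failed_comp (y : failed_type) : {k : 'I_L & 'I_(n k)} :=
  Tagged (fun k => 'I_(n k))
    (cast_ord (nalive_failed (tag y)) (rshift (nalive (tag y)) (tagged y))).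

Definition special : {k : 'I_L & 'I_(n k)} :=
  Tagged (fun k => 'I_(n k)) (Ordinal (leq_ltn_trans (leq0n (m i)) hmi)).

Lemma eq_special x :
  (x == special) = (tag x == i) && (nat_of_ord (tagged x) == 0%N).
Proof.
case: x => k p; apply/eqP/andP => [-> //|[/= /eqP ki /eqP p0]].
by subst k; congr Tagged; exact: val_inj.
Qed.

Lemma component_cases (x : {k : 'I_L & 'I_(n k)}) :
  (nat_of_ord (tagged x) < nalive (tag x))%N \/ exists y, x = failed_comp y.
Proof.
case: x => k p; case: (ltnP p (nalive k)) => hp; [by left | right].
have hj : (p - nalive k < nfailed k)%N.
  by have := nalive_failed k; have := ltn_ord p; lia.
exists (Tagged (fun k => 'I_(nfailed k)) (Ordinal hj)).
by congr Tagged; apply: val_inj => /=; lia.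
Qed.

Definition alive_thresholds k (a : R) : seq R := ncons (k == i) a (nseq (m k) t).

Definition thresholds (a : R) (S : {set failed_type}) k : seq R :=
  alive_thresholds k a ++
  [seq if Tagged (fun k => 'I_(nfailed k)) j \in S then t else -1
     | j <- enum 'I_(nfailed k)].

Definition thresholds_of_cards (a : R) (J : {dffun forall k, 'I_(nfailed k).+1}) k
    : seq R :=
  ncons (m k + J k) t (ncons (k == i) a (nseq (nfailed k - J k) (-1))).

Lemma size_thresholds a S k : size (thresholds a S k) = n k.
Proof.
rewrite size_cat size_ncons size_nseq size_map size_enum_ord.
by rewrite [((k == i) + _)%N]addnC nalive_failed.
Qed.

Lemma perm_thresholds a S k :
  perm_eq (thresholds a S k) (thresholds_of_cards a (fibre_cards S) k).
Proof.
rewrite /thresholds /thresholds_of_cards /alive_thresholds fibre_cardsE -!cat_nseq.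
have count_fibre : count (fun j => Tagged (fun k => 'I_(nfailed k)) j \in S)
    (enum 'I_(nfailed k)) = #|fibre S k|.
  transitivity (count (mem (fibre S k)) (enum 'I_(nfailed k))).
    by apply: eq_count => j; rewrite -[RHS]/(j \in fibre S k) finset.inE.
  by rewrite enumT -size_filter cardE.
rewrite (perm_catl _ (perm_eq_map_if _ _ _ _)) count_fibre size_enum_ord.
by rewrite nseqD -!catA perm_catCA perm_cat2l perm_catCA.
Qed.

Lemma nth_thresholds_alive a S k p : (p < nalive k)%N ->
  nth (-1) (thresholds a S k) p = nth (-1) (alive_thresholds k a) p.
Proof. by rewrite nth_cat size_ncons size_nseq addnC => ->. Qed.

Lemma nth_alive_thresholds k a p : (p < nalive k)%N ->
  nth (-1) (alive_thresholds k a) p = if (k == i) && (p == 0%N) then a else t.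
Proof.
rewrite nth_ncons nth_nseq; case: (k == i) => /= hp.
  by case: p hp => [|p] //=; rewrite addn1 ltnS subn1 => ->.
by rewrite subn0 -[m k]addn0 hp.
Qed.

Lemma nth_thresholds_failed a S k (j : 'I_(nfailed k)) :
  nth (-1) (thresholds a S k) (nalive k + j) =
  if Tagged (fun k => 'I_(nfailed k)) j \in S then t else -1.
Proof.
rewrite nth_cat size_ncons size_nseq [((k == i) + _)%N]addnC ltnNge leq_addr /= addKn.
by rewrite (nth_map j) ?size_enum_ord // nth_ord_enum.
Qed.

Lemma nth_thresholds_of_cards a J k p :
  nth (-1) (thresholds_of_cards a J k) p =
  if (p < m k + J k)%N then t else if (k == i) && (p == m k + J k)%N then a else -1.
Proof.
rewrite !nth_ncons nth_nil if_same; case: ltnP => // hp.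
move: (m k + J k)%N hp => c hp.
by case: (k == i) => //=; rewrite ltnS leqn0 subn_eq0 eqn_leq hp andbT.
Qed.

Definition failed_alive (y : failed_type) : set Omega :=
  [set w | t < T (failed_comp y) w].

Lemma survival_thresholds_failed a (S : {set failed_type}) :
  survival (thresholds a finset.set0) `&`
    [set w | forall y, y \in S -> failed_alive y w] =
  survival (thresholds a S).
Proof.
apply/seteqP; split => w /=.
  move=> [Hs HS] x; case: (component_cases x) => [xa|[[k j] ->]] /=.
    by have := Hs x; rewrite !nth_thresholds_alive.
  rewrite nth_thresholds_failed; case: ifP => [/HS //|_]; exact: lt_lifetime_neg1.
move=> Hs; split => [x|[k j] jS].
  case: (component_cases x) => [xa|[[k j] ->]] /=.
    by have := Hs x; rewrite !nth_thresholds_alive.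
  by rewrite nth_thresholds_failed finset.in_set0; exact: lt_lifetime_neg1.
by have := Hs (failed_comp (Tagged _ j)); rewrite /= nth_thresholds_failed jS.
Qed.

Definition window (a : R) : set Omega :=
  survival (thresholds a finset.set0) `&`
  [set w | forall y, y \in [set: failed_type]%SET -> ~ failed_alive y w].

Lemma measurable_window a : measurable (window a).
Proof.
apply: measurableI; first exact: measurable_survival.
by apply: measurable_forall_in => y; exact/measurableC/measurable_lt_lifetime.
Qed.

Lemma fine_window a :
  fine (P (window a)) =
  \sum_(J : {dffun forall k : 'I_L, 'I_(nfailed k).+1})
     (-1) ^+ (\sum_(k < L) nat_of_ord (J k))%N *
     (\prod_(k < L) ('C(nfailed k, J k))%:R) *
     fine (P (survival (thresholds_of_cards a J))).
Proof.
rewrite /window inclusion_exclusion; first last.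
- exact: measurable_survival.
- by move=> y; exact: measurable_lt_lifetime.
rewrite (eq_bigl predT) => [|S]; last exact: finset.subsetT.
pose Phi J := fine (P (survival (thresholds_of_cards a J))).
rewrite -(sum_by_fibre_cards _ Phi).
apply: eq_bigr => S _; rewrite survival_thresholds_failed.
by rewrite (survival_perm (size_thresholds a S) (perm_thresholds a S)).
Qed.

Lemma in_window a w : window a w <->
  (forall x, (nat_of_ord (tagged x) < nalive (tag x))%N ->
     (if x == special then a else t) < T x w) /\
  (forall y, T (failed_comp y) w <= t).
Proof.
split.
  move=> [Hs Hf]; split => [x xa|y].
    by have := Hs x; rewrite nth_thresholds_alive // nth_alive_thresholds // eq_special.
  by rewrite leNgt; apply/negP; apply: Hf; rewrite finset.in_setT.
move=> [Ha Hf]; split => [x|y _]; last by apply/negP; rewrite -leNgt.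
case: (component_cases x) => [xa|[[k j] ->]] /=.
  by rewrite nth_thresholds_alive // nth_alive_thresholds // -eq_special; exact: Ha.
by rewrite nth_thresholds_failed finset.in_set0; exact: lt_lifetime_neg1.
Qed.

Definition window_cond (delta : R) (x : {k : 'I_L & 'I_(n k)}) (w : Omega) : bool :=
  if tag x == i then
    (if nat_of_ord (tagged x) == 0%N then t < T x w <= t + delta
     else if (nat_of_ord (tagged x) <= m i)%N then t < T x w
     else T x w <= t)
  else
    (if (nat_of_ord (tagged x) < m (tag x))%N then t < T x w
     else T x w <= t).

Lemma window_cond_alive delta x w : (nat_of_ord (tagged x) < nalive (tag x))%N ->
  window_cond delta x w = (t < T x w) && ((x == special) ==> (T x w <= t + delta)).
Proof.
rewrite /window_cond eq_special; case: x => k p /=; case: eqP => [ki|_] /= hp.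
  subst k; case: (nat_of_ord p) hp => [|q] //=.
  by rewrite addn1 ltnS => ->; rewrite andbT.
by rewrite andbT -[m k]addn0 hp.
Qed.

Lemma window_cond_failed delta y w :
  window_cond delta (failed_comp y) w = (T (failed_comp y) w <= t).
Proof.
case: y => k j; rewrite /window_cond /=; move: (nat_of_ord j) => q.
case: eqP => [ki|_] /=.
  by subst k; rewrite addn1 addSn /= ltnNge leq_addr.
by rewrite addn0 ltnNge leq_addr.
Qed.

Lemma window_sub delta : 0 < delta -> window (t + delta) `<=` window t.
Proof.
move=> hdelta w /in_window[Ha Hf]; apply/in_window; split => // x xa.
rewrite if_same; have := Ha x xa; case: ifP => // _.
by apply: lt_trans; rewrite ltrDl.
Qed.

Lemma window_eventE delta : 0 < delta ->
  [set w | forall x, window_cond delta x w] = window t `\` window (t + delta).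
Proof.
move=> hdelta; have special_alive : (nat_of_ord (tagged special) < nalive i)%N.
  by rewrite eqxx addn1.
apply/seteqP; split => w /= H.
  split.
    apply/in_window; split => [x xa|y]; last by rewrite -(window_cond_failed delta).
    by have := H x; rewrite window_cond_alive // if_same => /andP[].
  move/in_window => [/(_ _ special_alive) + _]; rewrite eqxx.
  have := H special; rewrite window_cond_alive // eqxx /= => /andP[_].
  by rewrite leNgt => /negP.
move: H => [/in_window[Ht Hf] Htd] x.
case: (component_cases x) => [xa|[y ->]]; last by rewrite window_cond_failed.
have := Ht x xa; rewrite if_same window_cond_alive // => -> /=.
apply/implyP => /eqP xs; rewrite leNgt; apply/negP => ltd; apply: Htd.
apply/in_window; split => // x' x'a; case: eqP => [->|_]; first by rewrite -xs.
by have := Ht x' x'a; rewrite if_same.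
Qed.

End Configuration.

End Lifetimes.

Theorem theorem1 (R : realType) (d : measure_display) (Omega : measurableType d)
  (P : probability Omega R) (L : nat) (n : 'I_L -> nat)
  (T : {k : 'I_L & 'I_(n k)} -> {RV P >-> R})
  (Fbar : 'I_L -> R -> R) (Chat : ({k : 'I_L & 'I_(n k)} -> R) -> R)
  (* lifetimes are nonnegative *)
  (hT0 : forall x w, 0 <= T x w)
  (* Fbar k is the common reliability function of the components of type k *)
  (hF : forall (x : {k : 'I_L & 'I_(n k)}) (s : R),
      P [set w | s < T x w] = (Fbar (tag x) s)%:E)
  (* exchangeability within each type (invariance of the joint law, expressed
     through the joint reliability function, under within-type permutations) *)
  (hexch : forall (sg : forall k : 'I_L, {perm 'I_(n k)})
                  (s : {k : 'I_L & 'I_(n k)} -> R),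
      P [set w | forall x, s x < T (Tagged (fun k => 'I_(n k)) (sg (tag x) (tagged x))) w]
      = P [set w | forall x, s x < T x w])
  (* Chat is a survival copula representing the joint reliability function *)
  (hC : copula Chat)
  (hrep : forall s : {k : 'I_L & 'I_(n k)} -> R,
      P [set w | forall x, s x < T x w] = (Chat (fun x => Fbar (tag x) (s x)))%:E)
  (i : 'I_L) (m : 'I_L -> nat)
  (hm : forall k, k != i -> (m k <= n k)%N) (hmi : (m i < n i)%N)
  (t delta : R) (ht : 0 <= t) (hdelta : 0 < delta) :
  let bnd := fun k : 'I_L => (n k - m k - (k == i))%N in
  P [set w | forall x : {k : 'I_L & 'I_(n k)},
        if tag x == i then
          (if nat_of_ord (tagged x) == 0%N then t < T x w <= t + delta
           else if (nat_of_ord (tagged x) <= m i)%N then t < T x w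
           else T x w <= t)
        else
          (if (nat_of_ord (tagged x) < m (tag x))%N then t < T x w
           else T x w <= t)]
  = (\sum_(J : {dffun forall k : 'I_L, 'I_(bnd k).+1})
       (-1) ^+ (\sum_(k < L) nat_of_ord (J k))%N *
       (\prod_(k < L) ('C(bnd k, J k))%:R) *
       (Chat (fun x => if (nat_of_ord (tagged x) < m (tag x) + J (tag x) + (tag x == i))%N
                       then Fbar (tag x) t else 1)
        - Chat (fun x => if tag x == i then
                   (if (nat_of_ord (tagged x) < m i + J i)%N then Fbar i t
                    else if nat_of_ord (tagged x) == (m i + J i)%N then Fbar i (t + delta)
                    else 1)
                 else if (nat_of_ord (tagged x) < m (tag x) + J (tag x))%N
                      then Fbar (tag x) t else 1)))%:E.
Proof.
move=> bnd.
have Fbar_neg1 := reliability_neg1 _ hT0 _ hF.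
rewrite -[LHS]/(P [set w | forall x, window_cond T i m t delta x w]) window_eventE //.
have mW a : measurable (window T i m t hm hmi a) by exact: measurable_window.
rewrite -[LHS]fineK; last exact/fin_num_measure/measurableD.
rewrite fine_measureD // setIidr; last exact: window_sub.
rewrite !fine_window // -sumrB; congr EFin; apply: eq_bigr => J _.
rewrite -mulrBr /survival !hrep /=; congr (_ * (Chat _ - Chat _)).
(* The type of [J k] depends on [k == i]: abstract its values before casing on it. *)
all: pose c k := nat_of_ord (J k); apply/funext => -[k p] /=.
all: rewrite nth_thresholds_of_cards !(fun_if (Fbar k)) (Fbar_neg1 (Tagged _ p)).
all: rewrite -!/(c _) /=; clearbody c.
- case: ltnP => hp; first by rewrite ltn_addr.
  case: (k == i) => /=; last by rewrite addn0 ltnNge hp.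
  by rewrite addn1 ltnS leq_eqVlt ltnNge hp orbF.
- by case: eqP => [<-|_].
Qed.
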